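(* Let $f_1,\dots,f_n:\mathbb R^d\to\mathbb R$ be convex and differentiable with $L_i$-Lipschitz gradients ($L_i>0$), $f=\frac1n\sum_if_i$, and let $x_*\in\mathbb R^d$ be any fixed point (in the paper, a minimizer of $F=f+\psi$). For any permutation $\sigma=(\sigma^1,\dots,\sigma^n)$ of $[n]$, $$\sum_{i=2}^n\frac{L_{\sigma^i}}{n}\Big\|\sum_{j=1}^{i-1}\nabla f_{\sigma^j}(x_* )\Big\|^2\le n^2\bar L\sigma^2_{\mathrm{any}}.$$ If $\sigma$ is uniformly distributed over all permutations of $[n]$, then $$\mathbb E\left[\sum_{i=2}^n\frac{L_{\sigma^i}}{n}\Big\|\sum_{j=1}^{i-1}\nabla f_{\sigma^j}(x_* )\Big\|^2\right]\le\frac23n\bar L\sigma^2_{\mathrm{rand}}.$$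
   Context: $\bar L=\frac1n\sum_{i=1}^nL_i$; $\sigma^2_{\mathrm{any}}=\frac1n\sum_{i=1}^n\|\nabla f_i(x_* )\|^2$; $\sigma^2_{\mathrm{rand}}=\sigma^2_{\mathrm{any}}+n\|\nabla f(x_* )\|^2$; $\|\cdot\|$ is the Euclidean norm. *)

From HB Require Import structures.
From mathcomp Require Import all_boot all_order all_algebra all_fingroup.
From mathcomp Require Import all_classical all_reals.
From mathcomp Require Import topology normedtype derive.
Set Implicit Arguments. Unset Strict Implicit. Unset Printing Implicit Defensive.
Import Order.TTheory GRing.Theory Num.Theory.
Import numFieldNormedType.Exports.
Local Open Scope ring_scope.

Definition dotv {R : realType} {d : nat} (u v : 'rV[R]_d) : R :=
  \sum_(k < d) u 0 k * v 0 k.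
Definition sqnorm {R : realType} {d : nat} (u : 'rV[R]_d) : R := dotv u u.
Definition enorm {R : realType} {d : nat} (u : 'rV[R]_d) : R := Num.sqrt (sqnorm u).

Definition is_gradient {R : realType} {d : nat}
  (f : 'rV[R]_d -> R) (g : 'rV[R]_d -> 'rV[R]_d) : Prop :=
  forall x, differentiable f x /\ forall v, 'd f x v = dotv (g x) v.

Definition convex_fun {R : realType} {d : nat} (f : 'rV[R]_d -> R) : Prop :=
  forall (x y : 'rV[R]_d) (t : R), 0 <= t <= 1 ->
    f (t *: x + (1 - t) *: y) <= t * f x + (1 - t) * f y.

Definition lipschitz_grad {R : realType} {d : nat}
  (g : 'rV[R]_d -> 'rV[R]_d) (L : R) : Prop :=
  forall x y, enorm (g x - g y) <= L * enorm (x - y).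

(* The quantity  sum_{i=2}^n L_{s^i}/n * || sum_{j<i} grad f_{s^j}(x_star) ||^2
   (0-based indices: i ranges over 1..n-1, j over 0..i-1). *)
Definition shuffle_sum {R : realType} {d n : nat}
  (L : 'I_n -> R) (gs : 'I_n -> 'rV[R]_d) (s : 'S_n) : R :=
  \sum_(i < n | (1 <= i)%N) L (s i) / n%:R *
     sqnorm (\sum_(j < n | (j < i)%N) gs (s j)).

Definition Lbar {R : realType} {n : nat} (L : 'I_n -> R) : R :=
  (\sum_(i < n) L i) / n%:R.
Definition sigma_any {R : realType} {d n : nat} (gs : 'I_n -> 'rV[R]_d) : R :=
  (\sum_(i < n) sqnorm (gs i)) / n%:R.
(* gradient of f = (1/n) sum f_i at x_star is (1/n) sum grad f_i(x_star) *)
Definition sigma_rand {R : realType} {d n : nat} (gs : 'I_n -> 'rV[R]_d) : R :=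
  sigma_any gs + n%:R * sqnorm (n%:R^-1 *: \sum_(i < n) gs i).

From HB Require Import structures.
From mathcomp Require Import all_boot all_order all_algebra all_fingroup.
From mathcomp Require Import all_classical all_reals.
From mathcomp Require Import topology normedtype derive.
From mathcomp Require Import ring lra zify.
Import Order.TTheory GRing.Theory Num.Theory.
Import numFieldNormedType.Exports.
Set Implicit Arguments. Unset Strict Implicit. Unset Printing Implicit Defensive.
Local Open Scope ring_scope.

(* Write g_j for the gradients at x_*, A = sum_j ||g_j||^2 and T = sum_j g_j.
   For a fixed permutation, Cauchy-Schwarz gives ||sum_(j<i) g_(s j)||^2 <= n A.
   For the average over all permutations, expand the squared norm into terms
   L_(s i) <g_(s j), g_(s k)> with j, k < i: at distinct positions the values
   of a uniform permutation are uniform over distinct indices, and positions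
   j < i (resp. j, k < i with j <> k) make up 1/2 (resp. 1/3) of the distinct
   pairs (resp. triples). Hence the average equals
     1/n sum_a L_a ((A - ||g_a||^2)/2 + (||T - g_a||^2 - (A - ||g_a||^2))/3),
   which is at most 2/3 (sum_a L_a)(A + ||T||^2) / n because
   ||T - g_a||^2 <= 2 ||T||^2 + 2 ||g_a||^2. *)

Section EuclideanNorm.
Variables (R : realType) (d : nat).
Implicit Types u w : 'rV[R]_d.

Lemma sqnorm_ge0 u : 0 <= sqnorm u.
Proof. by apply: sumr_ge0 => k _; rewrite -expr2 sqr_ge0. Qed.

Lemma sqnormZ (c : R) u : sqnorm (c *: u) = c ^+ 2 * sqnorm u.
Proof. by rewrite /sqnorm /dotv mulr_sumr; apply: eq_bigr => k _; rewrite !mxE; ring. Qed.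

Lemma dotv_suml (I : Type) (r : seq I) (P : pred I) (F : I -> 'rV[R]_d) u :
  dotv (\sum_(j <- r | P j) F j) u = \sum_(j <- r | P j) dotv (F j) u.
Proof.
rewrite /dotv; under eq_bigr => k _ do rewrite summxE mulr_suml.
exact: exchange_big.
Qed.

Lemma dotv_sumr (I : Type) (r : seq I) (P : pred I) (F : I -> 'rV[R]_d) u :
  dotv u (\sum_(j <- r | P j) F j) = \sum_(j <- r | P j) dotv u (F j).
Proof.
rewrite /dotv; under eq_bigr => k _ do rewrite summxE mulr_sumr.
exact: exchange_big.
Qed.

Lemma sqnorm_sum (I : Type) (r : seq I) (P : pred I) (F : I -> 'rV[R]_d) :
  sqnorm (\sum_(j <- r | P j) F j) =
  \sum_(j <- r | P j) \sum_(k <- r | P k) dotv (F j) (F k).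
Proof. by rewrite /sqnorm dotv_suml; apply: eq_bigr => j _; rewrite dotv_sumr. Qed.

Lemma dotv_le_sqnorm u w : 2 * dotv u w <= sqnorm u + sqnorm w.
Proof.
rewrite /sqnorm /dotv -big_split mulr_sumr /=; apply: ler_sum => k _.
have := sqr_ge0 (u 0 k - w 0 k); rewrite -!expr2; nra.
Qed.

Lemma sqnormB_le u w : sqnorm (u - w) <= 2 * sqnorm u + 2 * sqnorm w.
Proof.
rewrite /sqnorm /dotv !mulr_sumr -big_split /=; apply: ler_sum => k _.
rewrite !mxE; have := sqr_ge0 (u 0 k + w 0 k); rewrite -!expr2; nra.
Qed.

Lemma sqnorm_sum_le (I : finType) (P : pred I) (F : I -> 'rV[R]_d) :
  sqnorm (\sum_(j | P j) F j) <= #|P|%:R * \sum_(j | P j) sqnorm (F j).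
Proof.
have <- : \sum_(j | P j) \sum_(k | P k) (sqnorm (F j) + sqnorm (F k)) / 2 =
    #|P|%:R * \sum_(j | P j) sqnorm (F j).
  under eq_bigr => j _ do rewrite -mulr_suml big_split /= sumr_const.
  by rewrite -mulr_suml big_split /= sumrMnl sumr_const -mulr_natl; field.
rewrite sqnorm_sum; apply: ler_sum => j _; apply: ler_sum => k _.
have := dotv_le_sqnorm (F j) (F k); lra.
Qed.

Lemma sqnorm_sum_le_card (I : finType) (P : pred I) (F : I -> 'rV[R]_d) :
  sqnorm (\sum_(j | P j) F j) <= #|I|%:R * \sum_j sqnorm (F j).
Proof.
have F_ge0 j : 0 <= sqnorm (F j) by exact: sqnorm_ge0.
apply: (le_trans (sqnorm_sum_le P F)); apply: ler_pM.
- by rewrite ler0n.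
- exact: sumr_ge0.
- by rewrite ler_nat max_card.
- by rewrite [leRHS](bigID P) /= lerDl sumr_ge0.
Qed.
End EuclideanNorm.

Lemma sum_ord_natr (R : comNzRingType) m :
  2 * \sum_(i < m) (i%:R : R) = m%:R * (m%:R - 1).
Proof.
elim: m => [|m IH]; first by rewrite big_ord0 mulr0 mul0r.
by rewrite big_ord_recr /= mulrDr IH -addn1 natrD; ring.
Qed.

Lemma sum_ord_natr_falling2 (R : comNzRingType) m :
  3 * \sum_(i < m) (i%:R : R) * (i%:R - 1) = m%:R * (m%:R - 1) * (m%:R - 2).
Proof.
elim: m => [|m IH]; first by rewrite big_ord0 mulr0 !mul0r.
by rewrite big_ord_recr /= mulrDr IH -addn1 natrD; ring.
Qed.

Section PermutationSums.
Variables (R : realFieldType) (n : nat).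
Implicit Types (i j k : 'I_n) (t : 'S_n).

Definition perm_sum2 (F : 'I_n -> 'I_n -> R) i j := \sum_(s : 'S_n) F (s i) (s j).
Definition perm_sum3 (F : 'I_n -> 'I_n -> 'I_n -> R) i j k :=
  \sum_(s : 'S_n) F (s i) (s j) (s k).

Definition sum_distinct2 (F : 'I_n -> 'I_n -> R) :=
  \sum_a \sum_(b | b != a) F a b.
Definition sum_distinct3 (F : 'I_n -> 'I_n -> 'I_n -> R) :=
  \sum_a \sum_(b | b != a) \sum_(c | (c != a) && (c != b)) F a b c.

Lemma sum_permM (t : 'S_n) (H : 'S_n -> R) :
  \sum_(s : 'S_n) H (t * s)%g = \sum_(s : 'S_n) H s.
Proof. by rewrite [RHS](reindex_inj (mulgI t)). Qed.

Lemma perm_sum2_perm F t i j : perm_sum2 F (t i) (t j) = perm_sum2 F i j.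
Proof.
by rewrite /perm_sum2 -[RHS](sum_permM t); apply: eq_bigr => s _; rewrite !permM.
Qed.

Lemma perm_sum3_perm F t i j k :
  perm_sum3 F (t i) (t j) (t k) = perm_sum3 F i j k.
Proof.
by rewrite /perm_sum3 -[RHS](sum_permM t); apply: eq_bigr => s _; rewrite !permM.
Qed.

Lemma perm_sum2_distinct_eq F i j i' j' :
  i != j -> i' != j' -> perm_sum2 F i j = perm_sum2 F i' j'.
Proof.
move=> ij i'j'; rewrite -(perm_sum2_perm F (tperm i i')) tpermL.
set j1 := tperm i i' j.
have i'j1 : i' != j1 by rewrite -[X in X != _](tpermL i i') (inj_eq perm_inj).
by rewrite -(perm_sum2_perm F (tperm j1 j')) tpermL tpermD // eq_sym.
Qed.

Lemma perm_sum3_distinct_eq F i j k i' j' k' :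
  [&& i != j, i != k & j != k] -> [&& i' != j', i' != k' & j' != k'] ->
  perm_sum3 F i j k = perm_sum3 F i' j' k'.
Proof.
move=> /and3P[ij ik jk] /and3P[i'j' i'k' j'k'].
rewrite -(perm_sum3_perm F (tperm i i')) tpermL.
set j1 := tperm i i' j; set k1 := tperm i i' k.
have i'j1 : i' != j1 by rewrite -[X in X != _](tpermL i i') (inj_eq perm_inj).
have i'k1 : i' != k1 by rewrite -[X in X != _](tpermL i i') (inj_eq perm_inj).
have j1k1 : j1 != k1 by rewrite (inj_eq perm_inj).
rewrite -(perm_sum3_perm F (tperm j1 j')) tpermL tpermD 1?eq_sym //.
set k2 := tperm j1 j' k1.
have fix_i' : tperm j1 j' i' = i' by rewrite tpermD // eq_sym.
have i'k2 : i' != k2 by rewrite -[X in X != _]fix_i' (inj_eq perm_inj).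
have j'k2 : j' != k2 by rewrite -[X in X != _](tpermL j1 j') (inj_eq perm_inj).
by rewrite -(perm_sum3_perm F (tperm k2 k')) tpermL !tpermD 1?eq_sym.
Qed.

Lemma sum_distinct2_perm F (s : 'S_n) :
  sum_distinct2 (fun a b => F (s a) (s b)) = sum_distinct2 F.
Proof.
rewrite /sum_distinct2 [RHS](reindex_inj (@perm_inj _ s)); apply: eq_bigr => a _.
rewrite [RHS](reindex_inj (@perm_inj _ s)); apply: eq_bigl => b.
by rewrite (inj_eq perm_inj).
Qed.

Lemma sum_distinct3_perm F (s : 'S_n) :
  sum_distinct3 (fun a b c => F (s a) (s b) (s c)) = sum_distinct3 F.
Proof.
rewrite /sum_distinct3 [RHS](reindex_inj (@perm_inj _ s)); apply: eq_bigr => a _.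
rewrite [RHS](reindex_inj (@perm_inj _ s)); apply: eq_big => [b|b _].
  by rewrite (inj_eq perm_inj).
rewrite [RHS](reindex_inj (@perm_inj _ s)); apply: eq_bigl => c.
by rewrite !(inj_eq perm_inj).
Qed.

Lemma sum_distinct2_perm_sum2 F :
  sum_distinct2 (perm_sum2 F) = n`!%:R * sum_distinct2 F.
Proof.
rewrite /sum_distinct2 /perm_sum2.
under eq_bigr => a _ do rewrite exchange_big.
rewrite exchange_big /=.
under eq_bigr => s _ do rewrite -/(sum_distinct2 _) sum_distinct2_perm.
by rewrite sumr_const card_Sn mulr_natl.
Qed.

Lemma sum_distinct3_perm_sum3 F :
  sum_distinct3 (perm_sum3 F) = n`!%:R * sum_distinct3 F.
Proof.
rewrite /sum_distinct3 /perm_sum3.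
under eq_bigr => a _ do under eq_bigr => b _ do rewrite exchange_big.
under eq_bigr => a _ do rewrite exchange_big.
rewrite exchange_big /=.
under eq_bigr => s _ do rewrite -/(sum_distinct3 _) sum_distinct3_perm.
by rewrite sumr_const card_Sn mulr_natl.
Qed.

Lemma sum_neq_cst i (c : R) : \sum_(j | j != i) c = (n%:R - 1) * c.
Proof.
have := sumr_const [pred j : 'I_n | true] c.
rewrite (bigD1 i) //= cardT size_enum_ord -mulr_natl => sum_cst; lra.
Qed.

Lemma sum_distinct2_cst (c : R) :
  sum_distinct2 (fun _ _ => c) = n%:R * (n%:R - 1) * c.
Proof.
rewrite /sum_distinct2; under eq_bigr => a _ do rewrite sum_neq_cst.
by rewrite sumr_const card_ord -mulr_natl; ring.
Qed.

Lemma sum_distinct3_cst (c : R) :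
  sum_distinct3 (fun _ _ _ => c) = n%:R * (n%:R - 1) * (n%:R - 2) * c.
Proof.
have sum_neq2_cst (a b : 'I_n) : b != a ->
    \sum_(k | (k != a) && (k != b)) c = (n%:R - 2) * c.
  by move=> ba; have := sum_neq_cst a c; rewrite (bigD1 b) //=; lra.
rewrite /sum_distinct3.
under eq_bigr => a _ do under eq_bigr => b ba do rewrite sum_neq2_cst //.
under eq_bigr => a _ do rewrite sum_neq_cst.
by rewrite sumr_const card_ord -mulr_natl; ring.
Qed.

Lemma perm_sum2_distinct F i j : i != j ->
  n%:R * (n%:R - 1) * perm_sum2 F i j = n`!%:R * sum_distinct2 F.
Proof.
move=> ij; rewrite -sum_distinct2_cst -sum_distinct2_perm_sum2 /sum_distinct2.
apply: eq_bigr => a _; apply: eq_bigr => b ba.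
by apply: perm_sum2_distinct_eq; rewrite // eq_sym.
Qed.

Lemma perm_sum3_distinct F i j k : [&& i != j, i != k & j != k] ->
  n%:R * (n%:R - 1) * (n%:R - 2) * perm_sum3 F i j k = n`!%:R * sum_distinct3 F.
Proof.
move=> ijk; rewrite -sum_distinct3_cst -sum_distinct3_perm_sum3 /sum_distinct3.
apply: eq_bigr => a _; apply: eq_bigr => b ba; apply: eq_bigr => c /andP[ca cb].
by apply: perm_sum3_distinct_eq; rewrite // eq_sym ba eq_sym ca eq_sym cb.
Qed.

Lemma sum_distinct2_small F : (n <= 1)%N -> sum_distinct2 F = 0.
Proof.
move=> n_le1; apply: big1 => a _; apply: big_pred0 => b.
apply/negbTE/negPn/eqP/ord_inj; have := ltn_ord a; have := ltn_ord b; lia.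
Qed.

Lemma sum_distinct3_small F : (n <= 2)%N -> sum_distinct3 F = 0.
Proof.
move=> n_le2; apply: big1 => a _; apply: big1 => b ba; apply: big_pred0 => c.
apply/negbTE/andP => -[ca cb]; move: ba ca cb; rewrite -!(inj_eq (@ord_inj n)).
move=> /eqP ba /eqP ca /eqP cb.
have := ltn_ord a; have := ltn_ord b; have := ltn_ord c; lia.
Qed.

Lemma sum_ltn_cst i (c : R) : \sum_(j < n | (j < i)%N) c = i%:R * c.
Proof.
rewrite -(big_ord_widen _ (fun _ => c) (ltnW (ltn_ord i))) sumr_const card_ord.
by rewrite mulr_natl.
Qed.

Lemma sum_ltn_neq_cst i j (c : R) : (j < i)%N ->
  \sum_(k < n | (k < i)%N && (k != j)) c = (i%:R - 1) * c.
Proof. by move=> ji; have := sum_ltn_cst i c; rewrite (bigD1 j) //=; lra. Qed.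

Lemma sum_ltn_perm_sum2 (F : 'I_n -> 'I_n -> R) :
  \sum_(i < n) \sum_(j < n | (j < i)%N) perm_sum2 F i j =
  n`!%:R / 2 * sum_distinct2 F.
Proof.
have [n_le1|n_gt1] := leqP n 1.
  rewrite sum_distinct2_small // mulr0; apply: big1 => i _; apply: big_pred0 => j.
  by apply/negbTE; have := ltn_ord i; lia.
have n_gt0 : 0 < n%:R :> R by rewrite ltr0n; lia.
have n1_gt0 : 0 < n%:R - 1 :> R by rewrite subr_gt0 ltr1n.
have perm_sum2_val i j : (j < i)%N ->
    perm_sum2 F i j = n`!%:R * sum_distinct2 F / (n%:R * (n%:R - 1)).
  move=> ji; have ij : i != j by rewrite neq_ltn ji orbT.
  by rewrite -(perm_sum2_distinct F ij); field; rewrite !gt_eqF.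
under eq_bigr => i _ do rewrite (eq_bigr _ (perm_sum2_val i)) sum_ltn_cst.
have sum_i : \sum_(i < n) (i%:R : R) = n%:R * (n%:R - 1) / 2.
  by rewrite -sum_ord_natr; field.
by rewrite -mulr_suml sum_i; field; rewrite !gt_eqF.
Qed.

Lemma sum_ltn_perm_sum3 (F : 'I_n -> 'I_n -> 'I_n -> R) :
  \sum_(i < n) \sum_(j < n | (j < i)%N) \sum_(k < n | (k < i)%N && (k != j))
    perm_sum3 F i j k = n`!%:R / 3 * sum_distinct3 F.
Proof.
have [n_le2|n_gt2] := leqP n 2.
  rewrite sum_distinct3_small // mulr0; apply: big1 => i _; apply: big1 => j ji.
  apply: big_pred0 => k; apply/negbTE/andP => -[ki /eqP kj].
  by apply: kj; apply/ord_inj; have := ltn_ord i; lia.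
have n_gt0 : 0 < n%:R :> R by rewrite ltr0n; lia.
have n1_gt0 : 0 < n%:R - 1 :> R by rewrite subr_gt0 ltr1n; lia.
have n2_gt0 : 0 < n%:R - 2 :> R by rewrite subr_gt0 ltr_nat.
have perm_sum3_val i j k : (j < i)%N -> (k < i)%N && (k != j) ->
    perm_sum3 F i j k =
    n`!%:R * sum_distinct3 F / (n%:R * (n%:R - 1) * (n%:R - 2)).
  move=> ji /andP[ki kj]; have ijk : [&& i != j, i != k & j != k].
    by rewrite [i != j]neq_ltn [i != k]neq_ltn ji ki !orbT eq_sym kj.
  by rewrite -(perm_sum3_distinct F ijk); field; rewrite !gt_eqF.
under eq_bigr => i _ do under eq_bigr => j ji do
  rewrite (eq_bigr _ (perm_sum3_val i j ^~ ji)) sum_ltn_neq_cst //.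
under eq_bigr => i _ do rewrite sum_ltn_cst.
have sum_i : \sum_(i < n) (i%:R : R) * (i%:R - 1) =
    n%:R * (n%:R - 1) * (n%:R - 2) / 3.
  by rewrite -sum_ord_natr_falling2; field.
under eq_bigr => i _ do rewrite mulrA.
by rewrite -mulr_suml sum_i; field; rewrite !gt_eqF.
Qed.
End PermutationSums.

Lemma sum_perm {R : nmodType} {n : nat} (s : 'S_n) (F : 'I_n -> R) :
  \sum_i F (s i) = \sum_i F i.
Proof. by rewrite [RHS](reindex_inj (@perm_inj _ s)). Qed.

Section ShuffleSum.
Variables (R : realType) (d n : nat) (L : 'I_n -> R) (v : 'I_n -> 'rV[R]_d).

Lemma shuffle_sum_le (s : 'S_n) : (0 < n)%N -> (forall i, 0 < L i) ->
  shuffle_sum L v s <= n%:R ^+ 2 * Lbar L * sigma_any v.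
Proof.
move=> n_gt0 L_gt0; have n_neq0 : n%:R != 0 :> R by rewrite pnatr_eq0 -lt0n.
set A := \sum_i sqnorm (v i).
have A_ge0 : 0 <= A by apply: sumr_ge0 => i _; exact: sqnorm_ge0.
have -> : n%:R ^+ 2 * Lbar L * sigma_any v = \sum_i L (s i) * A.
  by rewrite -mulr_suml sum_perm /Lbar /sigma_any -/A; field.
rewrite /shuffle_sum [leRHS](bigID (fun i : 'I_n => (1 <= i)%N)) /=.
apply: ler_wpDr; first by apply: sumr_ge0 => i _; rewrite mulr_ge0 // ltW.
apply: ler_sum => i _; rewrite -mulrA ler_pM2l // ler_pdivrMl ?ltr0n //.
have := sqnorm_sum_le_card (fun j : 'I_n => (j < i)%N) (fun j => v (s j)).
by rewrite card_ord (sum_perm s (fun j => sqnorm (v j))).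
Qed.
End ShuffleSum.

Section ExpectedShuffleSum.
Variables (R : realType) (d n : nat) (L : 'I_n -> R) (v : 'I_n -> 'rV[R]_d).

Definition weighted_sqnorm (a b : 'I_n) := L a * sqnorm (v b).
Definition weighted_dotv (a b c : 'I_n) := L a * dotv (v b) (v c).

Lemma shuffle_sum_expand (s : 'S_n) : shuffle_sum L v s =
  n%:R^-1 * \sum_(i < n) \sum_(j < n | (j < i)%N)
    (weighted_sqnorm (s i) (s j) +
     \sum_(k < n | (k < i)%N && (k != j)) weighted_dotv (s i) (s j) (s k)).
Proof.
rewrite /shuffle_sum mulr_sumr big_mkcond /=; apply: eq_bigr => -[[|i] ?] _ /=.
  by rewrite big_pred0 ?mulr0.
rewrite sqnorm_sum !mulr_sumr; apply: eq_bigr => j ji.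
rewrite (bigD1 j) //= /weighted_sqnorm /weighted_dotv -!mulr_sumr /sqnorm; ring.
Qed.

Lemma sum_shuffle_sum : \sum_(s : 'S_n) shuffle_sum L v s =
  n`!%:R / n%:R * (sum_distinct2 weighted_sqnorm / 2 + sum_distinct3 weighted_dotv / 3).
Proof.
under eq_bigr => s _ do rewrite shuffle_sum_expand.
rewrite -mulr_sumr exchange_big /=.
under eq_bigr => i _ do rewrite exchange_big /=.
under eq_bigr => i _ do under eq_bigr => j _ do rewrite big_split /= exchange_big.
under eq_bigr => i _ do rewrite big_split.
rewrite big_split /= sum_ltn_perm_sum2 sum_ltn_perm_sum3; ring.
Qed.

Let A := \sum_i sqnorm (v i).
Let T := \sum_i v i.

Lemma sum_neq_sqnorm a : \sum_(b | b != a) sqnorm (v b) = A - sqnorm (v a).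
Proof. by rewrite /A [in RHS](bigD1 a) //= addrAC subrr add0r. Qed.

Lemma sum_distinct2_weighted_sqnorm :
  sum_distinct2 weighted_sqnorm = \sum_a L a * (A - sqnorm (v a)).
Proof.
by apply: eq_bigr => a _; rewrite /weighted_sqnorm -mulr_sumr sum_neq_sqnorm.
Qed.

Lemma sum_distinct3_weighted_dotv : sum_distinct3 weighted_dotv =
  \sum_a L a * (sqnorm (T - v a) - (A - sqnorm (v a))).
Proof.
apply: eq_bigr => a _; rewrite /weighted_dotv.
under eq_bigr => b _ do rewrite -mulr_sumr.
rewrite -mulr_sumr -sum_neq_sqnorm; congr (_ * _).
have -> : T - v a = \sum_(b | b != a) v b by rewrite /T (bigD1 a) //= addrAC subrr add0r.
rewrite sqnorm_sum -sumrB; apply: eq_bigr => b ba.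
by rewrite [in RHS](bigD1 b) //= /sqnorm addrAC subrr add0r.
Qed.

Lemma expected_shuffle_sum_le : (0 < n)%N -> (forall i, 0 < L i) ->
  n`!%:R^-1 * \sum_(s : 'S_n) shuffle_sum L v s
    <= 2%:R / 3%:R * n%:R * Lbar L * sigma_rand v.
Proof.
move=> n_gt0 L_gt0; have n_neq0 : n%:R != 0 :> R by rewrite pnatr_eq0 -lt0n.
have fact_neq0 : n`!%:R != 0 :> R by rewrite pnatr_eq0 -lt0n fact_gt0.
rewrite sum_shuffle_sum sum_distinct2_weighted_sqnorm sum_distinct3_weighted_dotv.
rewrite /Lbar /sigma_rand /sigma_any sqnormZ -/A -/T; set z := sqnorm T.
have -> : 2%:R / 3%:R * n%:R * ((\sum_a L a) / n%:R) *
    (A / n%:R + n%:R * (n%:R^-1 ^+ 2 * z)) = n%:R^-1 * \sum_a L a * (2 / 3 * (A + z)).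
  by rewrite -mulr_suml; field.
rewrite !mulr_suml -big_split /= mulrA mulrA mulVf // mul1r.
rewrite ler_wpM2l ?invr_ge0 ?ler0n //.
apply: ler_sum => a _; rewrite -!mulrA -mulrDr ler_wpM2l ?(ltW (L_gt0 a)) //.
have x_le_A : sqnorm (v a) <= A.
  by rewrite /A (bigD1 a) //= lerDl sumr_ge0 // => b _; exact: sqnorm_ge0.
have := sqnormB_le T (v a); have := sqnorm_ge0 (v a); have := sqnorm_ge0 T.
rewrite -/z; lra.
Qed.
End ExpectedShuffleSum.

Theorem mainTheorem13 (R : realType) (d n : nat)
  (f : 'I_n -> 'rV[R]_d -> R) (g : 'I_n -> 'rV[R]_d -> 'rV[R]_d)
  (L : 'I_n -> R) (xs : 'rV[R]_d) :
  (0 < n)%N ->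
  (forall i, convex_fun (f i)) ->
  (forall i, is_gradient (f i) (g i)) ->
  (forall i, 0 < L i) ->
  (forall i, lipschitz_grad (g i) (L i)) ->
  (forall s : 'S_n,
     shuffle_sum L (fun i => g i xs) s
       <= n%:R ^+ 2 * Lbar L * sigma_any (fun i => g i xs)) /\
  (n`!%:R^-1 * \sum_(s : 'S_n) shuffle_sum L (fun i => g i xs) s
       <= 2%:R / 3%:R * n%:R * Lbar L * sigma_rand (fun i => g i xs)).
Proof.
move=> n_gt0 _ _ L_gt0 _; split=> [s|].
  exact: shuffle_sum_le.
exact: expected_shuffle_sum_le.
Qed.
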